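(* Let $L$ be a positive integer and let $\{a_i(k)\}_{i\in\mathbb Z_L}$, $k\in\mathcal K=\mathbb Z_L$, be binary sequences. Let $s\ge2$ be an integer and $W(s)\ge0$ a number such that for all distinct keys $k_1,\ldots,k_s\in\mathcal K$ and all bits $b_1,\ldots,b_s$, $$|A_{b_1\ldots b_s}(k_1,\ldots,k_s)|\le \frac{L}{2^s}+W(s).$$ Let $0<\gamma<1$ with $\gamma L$ an integer, and set $L'=L\bigl(1+2^sW(s)/L\bigr)=L+2^sW(s)$, $\gamma'=\gamma\bigl(1+2^sW(s)/L\bigr)^{-1}$ (so $\gamma'L'=\gamma L$). Let $r$ be the integer with $P_s(r)\le\gamma'/2<P_s(r+1)$. Then for every $T\subset\mathbb Z_L$ with $|T|=\gamma L$, every $g:T\to\{0,1\}$ and every $s$ distinct keys $k_1,\ldots,k_s$, $$\min_{1\le i\le s}\bigl|\{j\in T: g(j)=a_j(k_i)\}\bigr|\le n_{\rm correct}(\gamma,\varepsilon):=L'\Bigl\{P_{s-1}(r)+\frac{s-r-1}{s}\bigl(\gamma'-2P_s(r)\bigr)\Bigr\},$$ where $\varepsilon=s/|\mathcal K|$. Consequently, fewer than $s$ keys $k$ satisfy $|\{j\in T:g(j)=a_j(k)\}|>n_{\rm correct}(\gamma,\varepsilon)$, so for a uniformly random key the number of correctly guessed bits does not exceed $n_{\rm correct}(\gamma,\varepsilon)$ with probability at least $1-\varepsilon$.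
   Context: $\mathbb Z_L=\{0,\ldots,L-1\}$ is the residue ring modulo $L$. For distinct keys $k_1,\ldots,k_s$ and bits $b_1,\ldots,b_s$, $A_{b_1\ldots b_s}(k_1,\ldots,k_s)=\{i\in\mathbb Z_L: a_i(k_1)=b_1,\ldots,a_i(k_s)=b_s\}$. For integers $s\ge1$ and $t$, $P_s(t)=2^{-s}\sum_{u=0}^{t}\binom{s}{u}$ is the cumulative distribution function of a binomial random variable with $s$ trials and success probability $1/2$ ($P_s(t)=0$ for $t<0$). *)

From HB Require Import structures.
From mathcomp Require Import all_boot all_order all_algebra.
Set Implicit Arguments. Unset Strict Implicit. Unset Printing Implicit Defensive.
Import Order.TTheory GRing.Theory Num.Theory.
Local Open Scope ring_scope.

Definition Pbin (R : realFieldType) (s : nat) (t : int) : R :=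
  if t < 0 then 0
  else (\sum_(0 <= u < (absz t).+1) ('C(s, u))%:R) / 2%:R ^+ s.

(* A_{b_1..b_s}(k_1..k_s) for keys k : 'I_s -> 'I_L, bits b : 'I_s -> bool;
   a k i is the bit a_i(k). *)
Definition Aset (L s : nat) (a : 'I_L -> 'I_L -> bool)
  (k : 'I_s -> 'I_L) (b : 'I_s -> bool) : {set 'I_L} :=
  [set i : 'I_L | [forall j : 'I_s, a (k j) i == b j]].

Definition ncorr (L : nat) (a : 'I_L -> 'I_L -> bool) (T : {set 'I_L})
  (g : 'I_L -> bool) (k : 'I_L) : nat :=
  #|[set j in T | g j == a k j]|.

Definition Lp (R : realFieldType) (L s : nat) (W : R) : R := L%:R + 2%:R ^+ s * W.
Definition gammap (R : realFieldType) (L s : nat) (W gamma : R) : R :=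
  gamma / (1 + 2%:R ^+ s * W / L%:R).

Definition ncorrect (R : realFieldType) (L s : nat) (W gamma : R) (r : int) : R :=
  Lp L s W * (Pbin R s.-1 r
    + ((s%:Z - r - 1)%:~R / s%:R) * (gammap L s W gamma - 2%:R * Pbin R s r)).

From HB Require Import structures.
From mathcomp Require Import all_boot all_order all_algebra.
From mathcomp Require Import zify ring lra.
Set Implicit Arguments. Unset Strict Implicit. Unset Printing Implicit Defensive.
Import Order.TTheory GRing.Theory Num.Theory.

(** At a position j the s keys split into B_j = {i | a_j(k_i) = 1} and its
complement, and g(j) agrees with exactly one side; so for any threshold m the
position j contributes at most m + (|B_j| - m)^+ + (|~B_j| - m)^+ correct
guesses. The positions with pattern B_j = B form the class A_{1_B}(k), so the
balance hypothesis bounds the total over j in T by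
m |T| + (L/2^s + W) * 2 sum_w C(s,w) (s-w-m)^+. For m = s - r - 1 this equals
s * n_correct (via s C(s-1,u) = (s-u) C(s,u)), so the least of the s counts is
at most n_correct, and s keys cannot all exceed it. *)

Definition excess (s m : nat) (B : {set 'I_s}) : nat := (#|B| - m + (#|~: B| - m))%N.

Definition binom_excess (s m : nat) : nat := \sum_(w < s.+1) 'C(s, w) * (s - w - m).

Lemma sum_excess_subsets s m :
  (\sum_(B : {set 'I_s}) excess m B = 2 * binom_excess s m)%N.
Proof.
rewrite /excess big_split /= (reindex_inj (@setC_inj _)) /= -big_split /=.
under eq_bigr => B _ do rewrite addnn -mul2n.
rewrite -big_distrr /=; congr (2 * _)%N.
have cardC (B : {set 'I_s}) : #|~: B| = (s - #|B|)%N.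
  by have := cardsC B; rewrite card_ord; lia.
under eq_bigr => B _ do rewrite cardC.
rewrite (partition_big (fun B : {set 'I_s} => inord #|B| : 'I_s.+1) predT) //=.
apply: eq_bigr => w _.
have inord_card (B : {set 'I_s}) : (inord #|B| == w :> 'I_s.+1) = (#|B| == w).
  by rewrite -val_eqE /= inordK // ltnS; have := max_card B; rewrite card_ord.
rewrite (eq_bigr (fun _ => s - w - m)%N);
  last by move=> B; rewrite inord_card => /eqP ->.
rewrite (eq_bigl (fun B => B \in [set B : {set 'I_s} | #|B| == w]));
  last by move=> B; rewrite inE inord_card.
by rewrite sum_nat_const card_draws card_ord.
Qed.

Lemma binom_excess_sub s t : (t <= s)%N ->
  binom_excess s (s - t) = (\sum_(0 <= w < t) 'C(s, w) * (t - w))%N.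
Proof.
move=> ts; rewrite /binom_excess.
rewrite -(big_mkord xpredT (fun w => 'C(s, w) * (s - w - (s - t))))%N.
rewrite (big_cat_nat _ (n := t)) //=; last by lia.
rewrite [X in (_ + X)%N]big1_seq ?addn0; last first.
  move=> w; rewrite mem_index_iota => /andP[_ /andP[tw _]].
  by rewrite (_ : _ - _ = 0)%N ?muln0 //; lia.
by apply: eq_big_nat => w /andP[_ wt]; congr (_ * _)%N; lia.
Qed.

Lemma binomial_tail_identity s t : (t <= s)%N ->
  (s * \sum_(0 <= u < t) 'C(s.-1, u) =
   (s - t) * \sum_(0 <= u < t) 'C(s, u) + binom_excess s (s - t))%N.
Proof.
move=> ts; rewrite binom_excess_sub // !big_distrr /= -big_split /=.
apply: eq_big_nat => u /andP[_ ut].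
by rewrite mul_bin_down (_ : s - u = (s - t) + (t - u))%N ?mulnDl 1?mulnC //; lia.
Qed.

Section DoubleCounting.

Variables (L s : nat) (a : 'I_L -> 'I_L -> bool) (k : 'I_s -> 'I_L).

Definition key_pattern (j : 'I_L) : {set 'I_s} := [set i | a (k i) j].

Lemma sum_ncorr_le T g m :
  (\sum_i ncorr a T g (k i) <= m * #|T| + \sum_j excess m (key_pattern j))%N.
Proof.
have agree j : (\sum_i (g j == a (k i) j) =
    if g j then #|key_pattern j| else #|~: key_pattern j|)%N.
  case: (g j); rewrite -sum1_card [RHS]big_mkcond /=; apply: eq_bigr => i _;
    by rewrite !inE; case: (a (k i) j).
have ncorrE i : ncorr a T g (k i) = (\sum_(j in T) (g j == a (k i) j))%N.
  rewrite /ncorr -sum1_card big_mkcond [RHS]big_mkcond; apply: eq_bigr => j _.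
  by rewrite inE; case: (j \in T); case: (g j == _).
under eq_bigr => i _ do rewrite ncorrE.
rewrite exchange_big /=.
apply: (@leq_trans (\sum_(j in T) (m + excess m (key_pattern j)))).
  by apply: leq_sum => j _; rewrite agree /excess; case: (g j); lia.
rewrite big_split /= sum_nat_const mulnC leq_add2l.
by rewrite [X in (_ <= X)%N](bigID (mem T)) /= leq_addr.
Qed.

Lemma pattern_class B : [set j | key_pattern j == B] = Aset a k (fun i => i \in B).
Proof.
apply/setP => j; rewrite !inE; apply/eqP/forallP => [<- i | eqB]; first by rewrite inE.
by apply/setP => i; rewrite inE; exact/eqP.
Qed.

Local Open Scope ring_scope.

Lemma sum_excess_le (R : realFieldType) m (c : R) :
  (forall b : 'I_s -> bool, (#|Aset a k b|)%:R <= c) ->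
  ((\sum_j excess m (key_pattern j))%:R : R) <= c * (2 * binom_excess s m)%:R.
Proof.
move=> balanced; rewrite -sum_excess_subsets.
rewrite (partition_big key_pattern predT) //= !natr_sum mulr_sumr.
apply: ler_sum => B _.
rewrite (eq_bigr (fun _ => excess m B)); last by move=> j /eqP ->.
rewrite (eq_bigl (fun j => j \in [set j | key_pattern j == B])); last by move=> j; rewrite inE.
by rewrite sum_nat_const natrM pattern_class ler_wpM2r ?balanced.
Qed.

End DoubleCounting.

Local Open Scope ring_scope.

Lemma exists_le_mean (R : realDomainType) n (f : 'I_n -> R) c :
  (0 < n)%N -> \sum_i f i <= n%:R * c -> exists i, f i <= c.
Proof.
move=> n_gt0 sum_le; exists [arg min_(i < Ordinal n_gt0) f i]%O.
case: arg_minP => // i _ f_min.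
rewrite -(ler_pM2l (_ : 0 < n%:R)) ?ltr0n //; apply: le_trans sum_le.
rewrite mulr_natl -[n in _ *+ n]card_ord -sumr_const.
by apply: ler_sum => j _; exact: f_min.
Qed.

Lemma card_lt_no_injection (T : finType) (A : {set T}) n :
  (forall k : 'I_n -> T, injective k -> exists i, k i \notin A) -> (#|A| < n)%N.
Proof.
move=> escape; rewrite ltnNge; apply/negP => n_le.
have [|i] := escape (fun i => enum_val (widen_ord n_le i)).
  by move=> x y /enum_val_inj /(congr1 val) /= /val_inj.
by rewrite enum_valP.
Qed.

Lemma Pbin_pred (R : realFieldType) s t :
  Pbin R s (t%:Z - 1) = (\sum_(0 <= u < t) 'C(s, u))%:R / 2%:R ^+ s.
Proof.
case: t => [|t]; first by rewrite /Pbin big_geq ?mul0r.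
by rewrite (_ : t.+1%:Z - 1 = t) /Pbin /= ?natr_sum //; lia.
Qed.

Lemma Pbin_ge1 (R : realFieldType) s (n : nat) : (s <= n)%N -> 1 <= Pbin R s n.
Proof.
move=> sn; rewrite /Pbin /= -natr_sum ler_pdivlMr ?exprn_gt0 ?ltr0n //.
rewrite mul1r -natrX ler_nat.
have -> : (2 ^ s = \sum_(0 <= u < s.+1) 'C(s, u))%N.
  rewrite -[2%N]/(1 + 1)%N expnDn big_mkord; apply: eq_bigr => u _.
  by rewrite !exp1n !muln1.
by rewrite (@big_cat_nat _ _ _ s.+1 0 n.+1) //= leq_addr.
Qed.

Lemma Pbin_bracket_index (R : realFieldType) s (c : R) (r : int) :
  0 <= c -> c < 1 -> Pbin R s r <= c -> c < Pbin R s (r + 1) ->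
  exists2 t : nat, (t <= s)%N & r = t%:Z - 1.
Proof.
move=> c_ge0 c_lt1 Pr_le lt_Pr1; case: r Pr_le lt_Pr1 => [n|[|n]] Pr_le lt_Pr1.
- exists n.+1; last by lia.
  rewrite ltnNge; apply/negP => /(Pbin_ge1 R) Pge1.
  by move: (le_lt_trans (le_trans Pge1 Pr_le) c_lt1); rewrite ltxx.
- by exists 0%N.
- by move: lt_Pr1; rewrite (_ : Negz n.+1 + 1 = Negz n) /Pbin /= ?ltNge ?c_ge0 //; lia.
Qed.

Section Rescaling.

Variables (R : realFieldType) (L s : nat) (W gamma : R).
Hypotheses (L_gt0 : (0 < L)%N) (W_ge0 : 0 <= W).

Lemma Lp_gt0 : 0 < Lp L s W.
Proof. by rewrite /Lp ltr_wpDr ?ltr0n // mulr_ge0 ?exprn_ge0. Qed.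

Lemma gammap_mul_Lp : gammap L s W gamma * Lp L s W = gamma * L%:R.
Proof.
have L0 : (L%:R : R) != 0 by rewrite pnatr_eq0 -lt0n.
rewrite /gammap /Lp; field.
by rewrite L0 (lt0r_neq0 Lp_gt0).
Qed.

Lemma gammap_itv : 0 <= gamma -> 0 <= gammap L s W gamma <= gamma.
Proof.
move=> gamma_ge0; apply/andP; split.
  by rewrite -(ler_pM2r Lp_gt0) mul0r gammap_mul_Lp mulr_ge0 ?ler0n.
by rewrite -(ler_pM2r Lp_gt0) gammap_mul_Lp ler_wpM2l // /Lp lerDl mulr_ge0 ?exprn_ge0.
Qed.

Lemma ncorrect_pred t : (0 < s)%N -> (t <= s)%N ->
  s%:R * ncorrect L s W gamma (t%:Z - 1) =
  (s - t)%:R * (gamma * L%:R)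
  + (L%:R / 2%:R ^+ s + W) * (2 * binom_excess s (s - t))%:R.
Proof.
move=> s_gt0 ts.
have := binomial_tail_identity ts; move/(congr1 (fun n => n%:R : R)).
rewrite natrD !natrM -gammap_mul_Lp /ncorrect !Pbin_pred.
set A := (\sum_(0 <= u < t) 'C(s.-1, u))%N; set B := (\sum_(0 <= u < t) 'C(s, u))%N.
move=> sA.
rewrite (_ : s%:Z - (t%:Z - 1) - 1 = (s - t)%N); last by lia.
have s0 : (s%:R : R) != 0 by rewrite pnatr_eq0 -lt0n.
have pow0 : (2%:R ^+ s.-1 : R) != 0 by rewrite expf_neq0 // pnatr_eq0.
have powS : (2%:R ^+ s : R) = 2%:R * 2%:R ^+ s.-1 by rewrite -exprS prednK.
rewrite (_ : A%:R = ((s - t)%:R * B%:R + (binom_excess s (s - t))%:R) / s%:R :> R);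
  last by rewrite -sA mulrC mulKf.
by rewrite /Lp powS; field; rewrite s0 pow0.
Qed.

End Rescaling.

Lemma sum_ncorr_le_ncorrect (R : realFieldType) L s (a : 'I_L -> 'I_L -> bool)
    (k : 'I_s -> 'I_L) (W gamma : R) (T : {set 'I_L}) (g : 'I_L -> bool) t :
  (0 < L)%N -> (0 < s)%N -> 0 <= W -> (t <= s)%N ->
  (forall b : 'I_s -> bool, (#|Aset a k b|)%:R <= L%:R / 2%:R ^+ s + W) ->
  (#|T|)%:R = gamma * L%:R ->
  \sum_i ((ncorr a T g (k i))%:R : R) <= s%:R * ncorrect L s W gamma (t%:Z - 1).
Proof.
move=> L_gt0 s_gt0 W_ge0 ts balanced cardT.
rewrite ncorrect_pred // -natr_sum.
pose m := (s - t)%N.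
apply: le_trans (_ : (m * #|T| + \sum_j excess m (key_pattern a k j))%:R <= _).
  by rewrite ler_nat sum_ncorr_le.
by rewrite natrD natrM cardT lerD2l sum_excess_le.
Qed.

Theorem corollary1 (R : realFieldType) (L : nat) (a : 'I_L -> 'I_L -> bool)
  (s : nat) (W gamma : R) (r : int) :
  (0 < L)%N -> (2 <= s)%N -> 0 <= W ->
  (forall (k : 'I_s -> 'I_L) (b : 'I_s -> bool), injective k ->
     (#|Aset a k b|)%:R <= L%:R / 2%:R ^+ s + W) ->
  0 < gamma -> gamma < 1 -> (exists m : int, gamma * L%:R = m%:~R) ->
  Pbin R s r <= gammap L s W gamma / 2%:R ->
  gammap L s W gamma / 2%:R < Pbin R s (r + 1) ->
  forall (T : {set 'I_L}) (g : 'I_L -> bool),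
    (#|T|)%:R = gamma * L%:R ->
    (forall k : 'I_s -> 'I_L, injective k ->
       exists i : 'I_s, (ncorr a T g (k i))%:R <= ncorrect L s W gamma r)
    /\ (#|[set k : 'I_L | (((ncorr a T g k)%:R : R) > ncorrect L s W gamma r)%R]| < s)%N
    /\ (1 : R) - s%:R / L%:R <=
         (#|[set k : 'I_L | (((ncorr a T g k)%:R : R) <= ncorrect L s W gamma r)%R]|)%:R
           / L%:R.
Proof.
move=> L_gt0 s_ge2 W_ge0 balanced gamma_gt0 gamma_lt1 _ Pr_le lt_Pr1 T g cardT.
have /andP[gammap_ge0 gammap_le] := @gammap_itv R L s W gamma L_gt0 W_ge0 (ltW gamma_gt0).
have [t t_le_s ->] : exists2 t : nat, (t <= s)%N & r = t%:Z - 1.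
  by apply: (Pbin_bracket_index _ _ Pr_le lt_Pr1); lra.
have s_gt0 : (0 < s)%N by lia.
have some_key_le (k : 'I_s -> 'I_L) : injective k ->
    exists i, ((ncorr a T g (k i))%:R : R) <= ncorrect L s W gamma (t%:Z - 1).
  move=> k_inj; apply: (exists_le_mean s_gt0).
  exact: sum_ncorr_le_ncorrect (balanced k ^~ k_inj) cardT.
set bad := [set k | _ < _]; set good := [set k | _ <= _].
have few_bad : (#|bad| < s)%N.
  apply: card_lt_no_injection => k /some_key_le [i le_i].
  by exists i; rewrite inE -leNgt.
have good_bad : (#|good| + #|bad| = L)%N.
  rewrite -[RHS](card_ord L) -(cardsC bad) addnC; congr (_ + _)%N.
  by apply: eq_card => k; rewrite !inE leNgt.
split=> //; split=> //.
have L0 : (L%:R : R) != 0 by rewrite pnatr_eq0 -lt0n.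
rewrite ler_pdivlMr ?ltr0n // mulrBl mul1r divfK // lerBlDr -natrD ler_nat; lia.
Qed.
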